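(* Let $\mathfrak{g}$ be any Lie algebra whose bracket, in a basis $\{X_0,\dots,X_7\}$, is given by the family $F_8$ below with $a_1=0$ (i.e. $\mathfrak{g}\in Fil_8(1)$). Then $\mathfrak{g}$ is not rigid in $\mathcal{F}il_8$, not rigid in $\mathcal{N}il_8$, and not rigid in $\mathcal{L}ie_8$; i.e. its $GL(8,\mathbb{K})$-orbit is not Zariski open in any of these three varieties.
   Context: $\mathbb{K}$ is algebraically closed of characteristic $0$. $\mathcal{L}ie_8$ is the affine algebraic variety of all Lie brackets on $\mathbb{K}^8$ (tuples of structure constants $C_{ij}^k$ satisfying skew-symmetry and the Jacobi identity), with $GL(8,\mathbb{K})$ acting by change of basis; $\mathcal{N}il_8\subset\mathcal{L}ie_8$ is the subvariety of nilpotent brackets and $\mathcal{F}il_8$ the (Zariski open in $\mathcal{N}il_8$) subset of filiform brackets (nilpotent of nilindex $7$). A Lie bracket is rigid in a $GL$-stable subset $S$ if its orbit is Zariski open in $S$. The family $F_8$ (parameters $a_1,a_2,a_4,a_5,a_6,a_7,a_8\in\mathbb{K}$ with $a_1(5a_4+2a_2)=0$): $\mu(X_0,X_i)=X_{i+1}$ ($1\le i\le 6$), $\mu(X_2,X_5)=a_1X_7$, $\mu(X_1,X_5)=a_1X_6+a_2X_7$, $\mu(X_3,X_4)=-a_1X_7$, $\mu(X_2,X_4)=a_4X_7$, $\mu(X_1,X_4)=a_1X_5+(a_2+a_4)X_6+a_5X_7$, $\mu(X_2,X_3)=a_4X_6+a_6X_7$, $\mu(X_1,X_3)=a_1X_4+(a_2+2a_4)X_5+(a_5+a_6)X_6+a_7X_7$,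 $\mu(X_1,X_2)=a_1X_3+(a_2+2a_4)X_4+(a_5+a_6)X_5+a_7X_6+a_8X_7$, all other brackets $\mu(X_i,X_j)$, $i<j$, being zero. Every 8-dimensional filiform Lie algebra is isomorphic to a member of $F_8$. $Fil_8(1)$ denotes the members with $a_1=0$, $Fil_8(2)$ those with $5a_4+2a_2=0$, and $\mathcal{F}il_8(k)$ the union of $GL(8,\mathbb{K})$-orbits of $Fil_8(k)$. *)

From HB Require Import structures.
From mathcomp Require Import all_boot all_order all_algebra.
Set Implicit Arguments. Unset Strict Implicit. Unset Printing Implicit Defensive.
Import Order.TTheory GRing.Theory Num.Theory.
Local Open Scope ring_scope.

(* A point of the ambient affine space K^(n^3): a tuple of structure
   constants, C i j k = C_{ij}^k, i.e. [X_i, X_j] = \sum_k C i j k X_k. *)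
Definition sconst (K : Type) (n : nat) := 'I_n -> 'I_n -> 'I_n -> K.

Inductive zpoly (K V : Type) : Type :=
| ZC of K
| ZX of V
| ZAdd of zpoly K V & zpoly K V
| ZMul of zpoly K V & zpoly K V.

Fixpoint zeval (K : nzRingType) (V : Type) (x : V -> K) (p : zpoly K V) : K :=
  match p with
  | ZC c => c
  | ZX v => x v
  | ZAdd p q => zeval x p + zeval x q
  | ZMul p q => zeval x p * zeval x q
  end.

Definition coords (K : Type) (n : nat) (C : sconst K n) (v : 'I_n * 'I_n * 'I_n) : K :=
  C v.1.1 v.1.2 v.2.

(* O is Zariski open in S (subspace topology of the Zariski topology on
   K^(n^3)): O is contained in S and O = S \cap U for U the complement of
   the common zero set of some set P of polynomials. *)
Definition zopen_in (K : nzRingType) (n : nat) (S O : sconst K n -> Prop) : Prop :=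
  (forall C, O C -> S C) /\
  exists P : zpoly K ('I_n * 'I_n * 'I_n) -> Prop,
    forall C, S C -> (O C <-> exists p, P p /\ zeval (coords C) p <> 0).

Definition br (K : nzRingType) (n : nat) (C : sconst K n) (x y : 'rV[K]_n) : 'rV[K]_n :=
  \row_k \sum_(i < n) \sum_(j < n) x 0 i * y 0 j * C i j k.

Definition evec (K : nzRingType) (n : nat) (i : 'I_n) : 'rV[K]_n := delta_mx 0 i.

(* Change of basis action of g in GL(n,K): (g.mu)(x,y) = g mu(g^-1 x, g^-1 y),
   where g acts on row vectors by right multiplication. *)
Definition act (K : fieldType) (n : nat) (g : 'M[K]_n) (C : sconst K n) : sconst K n :=
  fun i j k => (br C (evec K i *m invmx g) (evec K j *m invmx g) *m g) 0 k.

Definition orbit (K : fieldType) (n : nat) (C0 : sconst K n) (C : sconst K n) : Prop :=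
  exists g : 'M[K]_n, g \in unitmx /\ forall i j k, act g C0 i j k = C i j k.

Definition Lie_var (K : nzRingType) (n : nat) (C : sconst K n) : Prop :=
  (forall i j k, C i j k = - C j i k) /\
  (forall i j k m, \sum_(l < n) (C i j l * C l k m + C j k l * C l i m + C k i l * C l j m) = 0).

(* Lower central series: lcs C 0 = g, lcs C (k+1) = [g, lcs C k],
   represented as row spaces of square matrices. *)
Fixpoint lcs (K : fieldType) (n : nat) (C : sconst K n) (k : nat) : 'M[K]_n :=
  match k with
  | 0 => 1%:M
  | k.+1 => (\sum_(i < n) \sum_(r < n) <<br C (evec K i) (row r (lcs C k))>>)%MS
  end.

Definition Nil_var (K : fieldType) (n : nat) (C : sconst K n) : Prop :=
  Lie_var C /\ exists k, lcs C k = 0.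

Definition nilindex (K : fieldType) (n : nat) (C : sconst K n) (p : nat) : Prop :=
  lcs C p = 0 /\ lcs C p.-1 <> 0.

Definition Fil_var (K : fieldType) (n : nat) (C : sconst K n) : Prop :=
  Nil_var C /\ nilindex C n.-1.

Definition rigid_in (K : fieldType) (n : nat) (S : sconst K n -> Prop) (C : sconst K n) : Prop :=
  zopen_in S (orbit C).

(* The family F_8: coefficient of X_k in mu(X_i, X_j) for i < j. *)
Definition F8up (K : nzRingType) (a1 a2 a4 a5 a6 a7 a8 : K) (i j k : nat) : K :=
  match i, j, k with
  | 0, j, k => if (1 <= j <= 6)%N && (k == j.+1)%N then 1 else 0
  | 2, 5, 7 => a1
  | 1, 5, 6 => a1
  | 1, 5, 7 => a2
  | 3, 4, 7 => - a1
  | 2, 4, 7 => a4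
  | 1, 4, 5 => a1
  | 1, 4, 6 => a2 + a4
  | 1, 4, 7 => a5
  | 2, 3, 6 => a4
  | 2, 3, 7 => a6
  | 1, 3, 4 => a1
  | 1, 3, 5 => a2 + 2 * a4
  | 1, 3, 6 => a5 + a6
  | 1, 3, 7 => a7
  | 1, 2, 3 => a1
  | 1, 2, 4 => a2 + 2 * a4
  | 1, 2, 5 => a5 + a6
  | 1, 2, 6 => a7
  | 1, 2, 7 => a8
  | _, _, _ => 0
  end.

Definition F8 (K : nzRingType) (a1 a2 a4 a5 a6 a7 a8 : K) : sconst K 8 :=
  fun i j k =>
    if (i < j)%N then F8up a1 a2 a4 a5 a6 a7 a8 i j k
    else if (j < i)%N then - F8up a1 a2 a4 a5 a6 a7 a8 j i k
    else 0.

From Pilot Require Import Defs.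
From HB Require Import structures.
From mathcomp Require Import all_boot all_order all_algebra.
From mathcomp Require Import ring.
Import GRing.Theory.
Local Open Scope ring_scope.
Set Implicit Arguments. Unset Strict Implicit. Unset Printing Implicit Defensive.

(* For a1 = 0 the whole plane of brackets F8 0 b2 b4 a5 a6 a7 a8 consists of
   filiform (hence nilpotent) Lie brackets. An isomorphism h between two of them
   preserves the filtration by the spans of X_i, ..., X_7, and comparing the
   coefficients of [X_1, X_5] and [X_1, X_4] shows that it rescales the pair
   (a2, a4) by the common factor h11 / h00^2. Hence the orbit of mu meets a line
   through mu in a direction transversal to (a2, a4) only at mu. If the orbit
   were open, there would be a polynomial p with p(mu) <> 0 such that every
   point of the plane where p does not vanish lies in the orbit; restricted to
   the line, p is a nonzero polynomial in one variable, hence nonzero at some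
   t <> 0 (K has characteristic 0), a contradiction. *)

Local Notation o n := (@Ordinal 8 n isT).

Lemma big_ord8 (K : nzRingType) (F : 'I_8 -> K) : \sum_(i < 8) F i =
  F (o 0) + F (o 1) + F (o 2) + F (o 3) + F (o 4) + F (o 5) + F (o 6) + F (o 7).
Proof.
rewrite !big_ord_recr big_ord0 /= add0r.
by do ! congr (_ + _); congr F; apply: val_inj.
Qed.

Lemma ord8_ind (P : 'I_8 -> Prop) :
  P (o 0) -> P (o 1) -> P (o 2) -> P (o 3) ->
  P (o 4) -> P (o 5) -> P (o 6) -> P (o 7) -> forall i, P i.
Proof.
move=> P0 P1 P2 P3 P4 P5 P6 P7 [[|[|[|[|[|[|[|[|n]]]]]]]] lt_n8] //;
  by rewrite (bool_irrelevance lt_n8 isT).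
Qed.

Section F8Coefficients.
Variable K : nzRingType.

Lemma F8_skew (a1 a2 a4 a5 a6 a7 a8 : K) (i j k : 'I_8) :
  F8 a1 a2 a4 a5 a6 a7 a8 i j k = - F8 a1 a2 a4 a5 a6 a7 a8 j i k.
Proof. by rewrite /F8; case: ltngtP; rewrite ?opprK ?oppr0. Qed.

Lemma F8_diag (a1 a2 a4 a5 a6 a7 a8 : K) (i k : 'I_8) :
  F8 a1 a2 a4 a5 a6 a7 a8 i i k = 0.
Proof. by rewrite /F8 ltnn. Qed.

Variables a2 a4 a5 a6 a7 a8 : K.
Let mu := F8 0 a2 a4 a5 a6 a7 a8.

Lemma F8_coef_le_right (i j m : 'I_8) : (m <= j)%N -> mu i j m = 0.
Proof.
move: i j m; apply: ord8_ind; apply: ord8_ind; apply: ord8_ind => //= _;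
  by rewrite /mu /F8 /= ?oppr0.
Qed.

Lemma F8_coef_le1 (i j m : 'I_8) : (m <= 1)%N -> mu i j m = 0.
Proof.
move: i j m; apply: ord8_ind; apply: ord8_ind; apply: ord8_ind => //= _;
  by rewrite /mu /F8 /= ?oppr0.
Qed.

End F8Coefficients.

Lemma F8_rmorph (R S : nzRingType) (f : {rmorphism R -> S}) a1 a2 a4 a5 a6 a7 a8
    (i j k : 'I_8) :
  f (F8 a1 a2 a4 a5 a6 a7 a8 i j k) =
  F8 (f a1) (f a2) (f a4) (f a5) (f a6) (f a7) (f a8) i j k.
Proof.
have F8upE (i' j' k' : nat) : f (F8up a1 a2 a4 a5 a6 a7 a8 i' j' k') =
    F8up (f a1) (f a2) (f a4) (f a5) (f a6) (f a7) (f a8) i' j' k'.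
  rewrite /F8up; repeat match goal with |- context [match ?x with _ => _ end] =>
    destruct x end; by rewrite ?rmorph0 ?rmorph1 ?rmorphD ?rmorphN ?rmorphM ?rmorph_nat.
rewrite /F8; case: ifP => _; first exact: F8upE.
by case: ifP => _; rewrite ?rmorph0 // rmorphN F8upE.
Qed.

Section Jacobi.
Variables (K : comNzRingType) (n : nat) (C : sconst K n).
Hypothesis C_skew : forall i j k, C i j k = - C j i k.
Hypothesis C_diag : forall i k, C i i k = 0.

Definition jacobiator (i j k m : 'I_n) : K :=
  \sum_(l < n) (C i j l * C l k m + C j k l * C l i m + C k i l * C l j m).

Lemma jacobiator_cycle i j k m : jacobiator i j k m = jacobiator j k i m.
Proof. by apply: eq_bigr => l _; ring. Qed.

Lemma jacobiator_swap i j k m : jacobiator j i k m = - jacobiator i j k m.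
Proof.
rewrite /jacobiator -sumrN; apply: eq_bigr => l _.
rewrite (C_skew j i l) (C_skew i k l) (C_skew k j l); ring.
Qed.

Lemma jacobiator_diag i k m : jacobiator i i k m = 0.
Proof. by rewrite /jacobiator big1 // => l _; rewrite C_diag (C_skew k i l); ring. Qed.

Lemma Lie_var_sorted :
  (forall i j k m : 'I_n, (i < j < k)%N -> jacobiator i j k m = 0) -> Lie_var C.
Proof.
move=> sorted0; split=> // i j k m; rewrite -/(jacobiator i j k m).
have cyc := jacobiator_cycle; have swp := jacobiator_swap.
have [lt_ij|lt_ji|/val_inj<-] := ltngtP i j; last by rewrite jacobiator_diag.
- have [lt_jk|lt_kj|/val_inj<-] := ltngtP j k; last by rewrite cyc jacobiator_diag.
    exact/sorted0/andP.
  have [lt_ik|lt_ki|/val_inj<-] := ltngtP i k; last by rewrite cyc cyc jacobiator_diag.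
    by rewrite swp cyc sorted0 ?lt_ik ?oppr0.
  by rewrite cyc cyc sorted0 ?lt_ki.
- have [lt_jk|lt_kj|/val_inj<-] := ltngtP j k; last by rewrite cyc jacobiator_diag.
    have [lt_ik|lt_ki|/val_inj<-] := ltngtP i k; last by rewrite cyc cyc jacobiator_diag.
      by rewrite swp sorted0 ?lt_ji ?oppr0.
    by rewrite cyc sorted0 ?lt_jk.
  by rewrite swp cyc cyc sorted0 ?lt_kj ?oppr0.
Qed.

End Jacobi.

Lemma Lie_F8 (K : comNzRingType) (a2 a4 a5 a6 a7 a8 : K) :
  Lie_var (F8 0 a2 a4 a5 a6 a7 a8).
Proof.
apply: Lie_var_sorted; [exact: F8_skew | exact: F8_diag |].
apply: ord8_ind; apply: ord8_ind; apply: ord8_ind; try done;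
  apply: ord8_ind => _; rewrite /jacobiator big_ord8 /F8 /=; ring.
Qed.

Section BracketMatrices.
Variables (K : fieldType) (n : nat) (C : sconst K n).

Definition ad_mx (x : 'rV[K]_n) : 'M[K]_n := \matrix_(j, m) \sum_(i < n) x 0 i * C i j m.

Lemma br_ad_mx x v : br C x v = v *m ad_mx x.
Proof.
apply/rowP => m; rewrite !mxE exchange_big /=.
apply: eq_bigr => j _; rewrite mxE mulr_sumr; apply: eq_bigr => i _.
by rewrite mulrCA mulrA.
Qed.

Lemma br_evec (i j : 'I_n) : br C (evec K i) (evec K j) = \row_k C i j k.
Proof.
apply/rowP => k; rewrite !mxE (bigD1 i) //= [X in _ + X]big1; last first.
  by move=> a neq_ai; apply: big1 => b _; rewrite !mxE (negbTE neq_ai) !mul0r.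
rewrite addr0 (bigD1 j) //= [X in _ + X]big1; last first.
  by move=> b neq_bj; rewrite !mxE (negbTE neq_bj) mulr0 mul0r.
by rewrite !mxE !eqxx mul1r mul1r addr0.
Qed.

Lemma br_sub_lcs (i : 'I_n) k u :
  (u <= lcs C k)%MS -> (br C (evec K i) u <= lcs C k.+1)%MS.
Proof.
case/submxP => D ->; apply: (sumsmx_sup i) => //.
rewrite br_ad_mx -mulmxA; apply: submx_trans (submxMl _ _) _.
apply/row_subP => r; rewrite row_mul -br_ad_mx.
by apply: (sumsmx_sup r) => //; rewrite genmxE.
Qed.

Definition tail_mx (k : nat) : 'M[K]_n := diag_mx (\row_(j < n) ((k < j)%N)%:R).

Lemma sub_tail_mxP k (v : 'rV[K]_n) :
  (v <= tail_mx k)%MS <-> forall j : 'I_n, (j <= k)%N -> v 0 j = 0.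
Proof.
split=> [/submxP[D ->] j le_jk | v_head0].
  by rewrite mul_mx_diag !mxE ltnNge le_jk mulr0.
suff -> : v = v *m tail_mx k by apply: submxMl.
apply/rowP => j; rewrite mul_mx_diag !mxE.
by case: leqP => [/v_head0->|_]; rewrite ?mul0r ?mulr1.
Qed.

Lemma tail_mx_last : tail_mx n.-1 = 0.
Proof.
apply/matrixP => i j; have n_gt0 : (0 < n)%N := leq_ltn_trans (leq0n j) (ltn_ord j).
by rewrite !mxE ltnNge -ltnS prednK // ltn_ord mulr0n mul0rn.
Qed.

Hypothesis C_le_right : forall i j m : 'I_n, (m <= j)%N -> C i j m = 0.
Hypothesis C_le1 : forall i j m : 'I_n, (m <= 1)%N -> C i j m = 0.

Lemma br_head0 k (u v : 'rV[K]_n) :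
  (forall j : 'I_n, (j <= k)%N -> v 0 j = 0) ->
  forall m : 'I_n, (m <= k.+1)%N -> br C u v 0 m = 0.
Proof.
move=> v_head0 m le_mk1; rewrite mxE; apply: big1 => i _; apply: big1 => j _.
have [le_jk|lt_kj] := leqP j k; first by rewrite v_head0 // mulr0 mul0r.
by rewrite C_le_right ?mulr0 // (leq_trans le_mk1 lt_kj).
Qed.

Lemma br_head1 (u v : 'rV[K]_n) (m : 'I_n) : (m <= 1)%N -> br C u v 0 m = 0.
Proof.
by move=> le_m1; rewrite mxE; apply: big1 => a _; apply: big1 => b _; rewrite C_le1 ?mulr0.
Qed.

Lemma lcs_sub_tail k : (lcs C k.+1 <= tail_mx k.+1)%MS.
Proof.
elim: k => [|k IHk] /=; apply/sumsmx_subP => i _; apply/sumsmx_subP => r _;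
  rewrite genmxE; apply/sub_tail_mxP; first exact: br_head1.
by apply: br_head0; apply/sub_tail_mxP/(submx_trans _ IHk)/row_sub.
Qed.

End BracketMatrices.

Section Filiform.
Variables (K : fieldType) (a2 a4 a5 a6 a7 a8 : K).
Let mu := F8 0 a2 a4 a5 a6 a7 a8.

Lemma br_F8_X0 (i j : 'I_8) : (1 <= i <= 6)%N -> j = i.+1 :> nat ->
  br mu (evec K (o 0)) (evec K i) = evec K j.
Proof.
move=> i_range ji; rewrite br_evec; apply/rowP => k; rewrite !mxE /=.
move: i j k i_range ji; apply: ord8_ind; apply: ord8_ind; apply: ord8_ind => //= _ _;
  by rewrite /mu /F8 /=.
Qed.

Lemma lcs_F8_last : lcs mu 7 = 0.
Proof.
apply/eqP; rewrite -submx0 -(tail_mx_last K 8).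
exact/lcs_sub_tail/F8_coef_le1/F8_coef_le_right.
Qed.

Lemma evec_sub_lcs_F8 k : (k < 7)%N -> (evec K (inord k.+1) <= lcs mu k)%MS.
Proof.
elim: k => [_|k IHk lt_k1_7]; first exact: submx1.
rewrite -(@br_F8_X0 (inord k.+1)); first exact/br_sub_lcs/IHk/ltnW.
  by rewrite inordK // ltnW.
by rewrite !inordK // ltnW.
Qed.

Lemma Fil_F8 : Fil_var mu.
Proof.
split; first by split; [exact: Lie_F8 | exists 7; exact: lcs_F8_last].
split; first exact: lcs_F8_last.
move=> lcs6_0; have := @evec_sub_lcs_F8 6 isT.
have -> : inord 7 = o 7 by apply: ord_inj; rewrite inordK.
rewrite lcs6_0 submx0 => /eqP/rowP/(_ (o 7)); rewrite !mxE eqxx => /eqP.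
by rewrite oner_eq0.
Qed.

End Filiform.

Lemma unitmx_row_neq0 (F : fieldType) n (A : 'M[F]_n) i :
  A \in unitmx -> row i A != 0.
Proof.
rewrite -row_free_unit => A_free; apply/eqP => rowi0; move/row_freePn: A_free.
by apply; exists i; rewrite rowi0 sub0mx.
Qed.

Lemma orbit_br_hom (F : fieldType) n (C0 C : sconst F n) g :
  g \in unitmx -> (forall i j k, act g C0 i j k = C i j k) -> forall i j,
  br C (evec F i) (evec F j) *m invmx g = br C0 (row i (invmx g)) (row j (invmx g)).
Proof.
move=> g_unit gC0 i j; rewrite br_evec.
have -> : \row_k C i j k = br C0 (evec F i *m invmx g) (evec F j *m invmx g) *m g.
  by apply/rowP => k; rewrite mxE -gC0.
by rewrite -mulmxA mulmxV // mulmx1 /evec -!rowE.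
Qed.

Lemma scale_of_iso_coefs (F : fieldType)
    (a2 a4 b2 b4 h00 h10 h11 h44 h45 h55 h56 h66 h77 : F) :
  h77 != 0 -> h55 = h00 * h44 -> h66 = h00 * h55 -> h77 = h00 * h66 ->
  h10 * h66 = 0 ->
  b2 * h77 = h10 * h56 + h11 * h55 * a2 ->
  (b2 + b4) * h66 = h10 * h45 + h11 * h44 * (a2 + a4) ->
  exists l, b2 = l * a2 /\ b4 = l * a4.
Proof.
move=> nz77 d5 d6 d7 c1 c2 c3.
have /andP[nz00 nz66] : (h00 != 0) && (h66 != 0) by rewrite -negb_or -mulf_eq0 -d7.
have nz44 : h44 != 0.
  by move: nz66; rewrite d6 d5 !mulf_eq0 !negb_or => /and3P[].
have h10_0 : h10 = 0 by move/eqP: c1; rewrite mulf_eq0 (negbTE nz66) orbF => /eqP.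
rewrite {}h10_0 !mul0r !add0r {}d7 {}d6 {}d5 in c2 c3.
pose l := h11 / (h00 * h00).
have b2E : b2 = l * a2.
  apply: (mulIf (_ : h00 * (h00 * (h00 * h44)) != 0)); first by rewrite !mulf_neq0.
  by rewrite c2 /l; field.
have b24E : b2 + b4 = l * (a2 + a4).
  apply: (mulIf (_ : h00 * (h00 * h44) != 0)); first by rewrite !mulf_neq0.
  by rewrite c3 /l; field.
exists l; split=> //; apply: (addrI b2).
by rewrite b24E {1}b2E; ring.
Qed.

Section IsomorphismOfF8.
Variables (K : fieldType) (a2 a4 a5 a6 a7 a8 b2 b4 b5 b6 b7 b8 : K) (h : 'M[K]_8).
Let mu := F8 0 a2 a4 a5 a6 a7 a8.
Let nu := F8 0 b2 b4 b5 b6 b7 b8.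
Hypothesis h_hom : forall i j, br nu (evec K i) (evec K j) *m h = br mu (row i h) (row j h).

Lemma hom_row_succ (i j : 'I_8) : (1 <= i <= 6)%N -> j = i.+1 :> nat ->
  row j h = br mu (row (o 0) h) (row i h).
Proof. by move=> i_range ji; rewrite -h_hom (br_F8_X0 b2 b4 b5 b6 b7 b8 i_range ji) rowE. Qed.

Lemma hom_lower0 (i m : 'I_8) : (2 <= i)%N -> (m < i)%N -> h i m = 0.
Proof.
suff row_head0 k (lt_k2_8 : (k.+2 < 8)%N) (m' : 'I_8) :
    (m' <= k.+1)%N -> row (Ordinal lt_k2_8) h 0 m' = 0.
  by case: i => [[|[|k]] //= lt_k2_8] _ le_mk1; rewrite -(row_head0 k lt_k2_8 m) ?mxE.
elim: k lt_k2_8 m' => [|k IHk] lt_k2_8 m' le_mk1.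
  by rewrite (@hom_row_succ (o 1)) //; exact/br_head1/le_mk1/F8_coef_le1.
rewrite (@hom_row_succ (Ordinal (ltnW lt_k2_8))) //.
by apply: (br_head0 (F8_coef_le_right a2 a4 a5 a6 a7 a8) _ _ le_mk1) => j; exact: IHk.
Qed.

Lemma hom_coef (i j m : 'I_8) :
  \sum_(k < 8) nu i j k * h k m = \sum_(a < 8) \sum_(b < 8) h i a * h j b * mu a b m.
Proof.
transitivity ((br nu (evec K i) (evec K j) *m h) 0 m).
  by rewrite br_evec mxE; apply: eq_bigr => k _; rewrite mxE.
by rewrite h_hom mxE; apply: eq_bigr => a _; apply: eq_bigr => b _; rewrite !mxE.
Qed.

(* Expands [hom_coef i j m] and erases the entries of h killed by [hom_lower0]. *)
Local Ltac hom_coef_eq i j m :=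
  move: (hom_coef i j m); rewrite !big_ord8 /nu /mu /F8 /=;
  repeat match goal with |- context [@fun_of_matrix _ _ _ h ?r ?c] =>
    rewrite (@hom_lower0 r c isT isT) end;
  let E := fresh in
  move=> E; first [ refine (etrans _ (etrans E _)); ring
                  | refine (etrans _ (etrans (esym E) _)); ring ].

Hypothesis h_unit : h \in unitmx.

Lemma hom_F8_scale : exists l, b2 = l * a2 /\ b4 = l * a4.
Proof.
have nz77 : h (o 7) (o 7) != 0.
  apply: contra (unitmx_row_neq0 (o 7) h_unit) => /eqP h77_0.
  apply/eqP/rowP => j; move: j; apply: ord8_ind; rewrite !mxE //; exact: hom_lower0.
have d5 : h (o 5) (o 5) = h (o 0) (o 0) * h (o 4) (o 4) by hom_coef_eq (o 0) (o 4) (o 5).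
have d6 : h (o 6) (o 6) = h (o 0) (o 0) * h (o 5) (o 5) by hom_coef_eq (o 0) (o 5) (o 6).
have d7 : h (o 7) (o 7) = h (o 0) (o 0) * h (o 6) (o 6) by hom_coef_eq (o 0) (o 6) (o 7).
have c167 : h (o 1) (o 0) * h (o 6) (o 6) = 0 by hom_coef_eq (o 1) (o 6) (o 7).
have c157 : b2 * h (o 7) (o 7) =
    h (o 1) (o 0) * h (o 5) (o 6) + h (o 1) (o 1) * h (o 5) (o 5) * a2.
  by hom_coef_eq (o 1) (o 5) (o 7).
have c146 : (b2 + b4) * h (o 6) (o 6) =
    h (o 1) (o 0) * h (o 4) (o 5) + h (o 1) (o 1) * h (o 4) (o 4) * (a2 + a4).
  by hom_coef_eq (o 1) (o 4) (o 6).
exact: scale_of_iso_coefs nz77 d5 d6 d7 c167 c157 c146.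
Qed.

End IsomorphismOfF8.

Lemma orbit_F8_scale (K : fieldType) (a2 a4 a5 a6 a7 a8 b2 b4 b5 b6 b7 b8 : K) :
  Defs.orbit (F8 0 a2 a4 a5 a6 a7 a8) (F8 0 b2 b4 b5 b6 b7 b8) ->
  exists l, b2 = l * a2 /\ b4 = l * a4.
Proof.
case=> g [g_unit g_mu]; apply: (hom_F8_scale (h := invmx g)).
  exact: orbit_br_hom.
by rewrite unitmx_inv.
Qed.

Lemma zeval_poly_curve (K : comNzRingType) (V : Type) (x : K -> V -> K)
    (px : V -> {poly K}) (p : zpoly K V) :
  (forall t v, x t v = (px v).[t]) -> exists q : {poly K}, forall t, q.[t] = zeval (x t) p.
Proof.
move=> xE; elim: p => [c|v|p1 [q1 q1E] p2 [q2 q2E]|p1 [q1 q1E] p2 [q2 q2E]].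
- by exists c%:P => t; rewrite hornerC.
- by exists (px v) => t; rewrite /= xE.
- by exists (q1 + q2) => t; rewrite hornerD q1E q2E.
- by exists (q1 * q2) => t; rewrite hornerM q1E q2E.
Qed.

Lemma natr_inj_char0 (K : idomainType) :
  [pchar K] =i pred0 -> injective (fun n : nat => n%:R : K).
Proof.
move=> K0 m n /=; wlog le_mn : m n / (m <= n)%N.
  move=> hwlog; case: (leqP m n) => [/hwlog//|/ltnW le_nm /esym].
  by move/(hwlog _ _ le_nm)->.
move/eqP; rewrite eq_sym -subr_eq0 -natrB // ((pcharf0P K).1 K0) subn_eq0 => le_nm.
by apply/eqP; rewrite eqn_leq le_mn.
Qed.

Lemma poly_nonroot_natr (K : idomainType) (q : {poly K}) :
  [pchar K] =i pred0 -> q != 0 -> exists n, ~~ root q n.+1%:R.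
Proof.
move=> K0 q_neq0; pose rs := [seq n.+1%:R : K | n <- iota 0 (size q)].
have : ~~ all (root q) rs.
  apply/negP => all_roots.
  suff /(max_poly_roots q_neq0 all_roots) : uniq rs by rewrite size_map size_iota ltnn.
  by rewrite map_inj_uniq ?iota_uniq // => m n /(natr_inj_char0 K0) [].
by case/allPn => _ /mapP[n _ ->]; exists n.
Qed.

Lemma transversal_direction (K : fieldType) (a2 a4 : K) :
  exists u v : K, forall t l, a2 + t * u = l * a2 -> a4 + t * v = l * a4 -> t = 0.
Proof.
have [->|a4_neq0] := eqVneq a4 0.
  by exists 0, 1 => t l _; rewrite !mulr0 add0r mulr1.
exists 1, 0 => t l; rewrite !mulr0 !mulr1 addr0 => E2 E4.
have l1 : l = 1 by apply: (mulIf a4_neq0); rewrite mul1r -E4.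
by move: E2; rewrite l1 mul1r -{2}[a2]addr0 => /addrI.
Qed.

Lemma orbit_refl (K : fieldType) n (C : sconst K n) : Defs.orbit C C.
Proof.
exists 1%:M; split=> [|i j k]; first exact: unitmx1.
by rewrite /act invmx1 !mulmx1 br_evec mxE.
Qed.

Lemma F8_family_not_rigid (K : fieldType) (S : sconst K 8 -> Prop)
    (a2 a4 a5 a6 a7 a8 : K) :
  [pchar K] =i pred0 -> (forall b2 b4, S (F8 0 b2 b4 a5 a6 a7 a8)) ->
  ~ rigid_in S (F8 0 a2 a4 a5 a6 a7 a8).
Proof.
move=> K0 S_F8 [orbit_sub [P orbitP]].
have [u [v transversal]] := transversal_direction a2 a4.
pose curve t := F8 0 (a2 + t * u) (a4 + t * v) a5 a6 a7 a8.
pose pcurve := F8 0 (a2%:P + 'X * u%:P) (a4%:P + 'X * v%:P) a5%:P a6%:P a7%:P a8%:P.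
have mu_orbit := orbit_refl (F8 0 a2 a4 a5 a6 a7 a8).
have [p [Pp p_mu]] := (orbitP _ (orbit_sub _ mu_orbit)).1 mu_orbit.
have [q qE] : exists q : {poly K}, forall t, q.[t] = zeval (coords (curve t)) p.
  apply: (@zeval_poly_curve _ _ (fun t => coords (curve t))
                                 (fun w => pcurve w.1.1 w.1.2 w.2)) => t w.
  by rewrite -[RHS]/(horner_eval t _) F8_rmorph /= /horner_eval !hornerE.
have q0 : q.[0] != 0 by rewrite qE /curve !mul0r !addr0; apply/eqP.
have [|n qn] := poly_nonroot_natr K0 (q := q).
  by apply: contraNneq q0 => ->; rewrite horner0.
have : Defs.orbit (F8 0 a2 a4 a5 a6 a7 a8) (curve n.+1%:R).
  by apply/(orbitP _ (S_F8 _ _)); exists p; split=> //; rewrite -qE; apply/eqP.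
case/orbit_F8_scale => l [E2 E4].
by move/eqP: (transversal _ _ E2 E4); rewrite ((pcharf0P K).1 K0).
Qed.

Theorem proposition12 (K : closedFieldType) (hK : [pchar K] =i pred0)
    (a2 a4 a5 a6 a7 a8 : K) :
  let mu := F8 0 a2 a4 a5 a6 a7 a8 in
  ~ rigid_in (@Fil_var K 8) mu /\ ~ rigid_in (@Nil_var K 8) mu /\ ~ rigid_in (@Lie_var K 8) mu.
Proof.
move=> mu; split; [|split]; apply: F8_family_not_rigid hK _ => b2 b4.
- exact: Fil_F8.
- exact: (Fil_F8 b2 b4 a5 a6 a7 a8).1.
- exact: Lie_F8.
Qed.
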